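(* For every positive integer $b_1$ there exists $r^*_{b_1}\in[0,1]$ such that for every positive integer $b_2<m^*$ and every Nash equilibrium $\sigma^*$ of $\Gamma(b_1,b_2)$ whose attack strategy is supported on nonempty attack plans, $r(\sigma^* )=r^*_{b_1}$. (When $b_1<n^*$, every Nash equilibrium has attack strategy supported on plans of size $b_2$, and then $U_1(\sigma^* )=b_2r^*_{b_1}$ and $U_2(\sigma^* )=b_2(1-r^*_{b_1})$.)
   Context: Detection model: finite nonempty sets $\mathcal V$, $\mathcal E$, monitoring sets $\mathcal C_i\subseteq\mathcal E$ ($i\in\mathcal V$) with every $e\in\mathcal E$ in some $\mathcal C_i$; $\mathcal C_S=\bigcup_{i\in S}\mathcal C_i$; $F(S,T)=|\mathcal C_S\cap T|$. Set cover: $S\subseteq\mathcal V$ with $\mathcal C_S=\mathcal E$; $n^*$ = minimum size of a set cover. Set packing: $T\subseteq\mathcal E$ with $|\mathcal C_i\cap T|\le1$ for all $i$; $m^*$ = maximum size of a set packing. Game $\Gamma(b_1,b_2)$ ($b_1,b_2$ positive integers): $\mathcal A_1=\{S\subseteq\mathcal V:|S|\le b_1\}$, $\mathcal A_2=\{T\subseteq\mathcal E:|T|\le b_2\}$; mixed strategies $\sigma^1\in\Delta(\mathcal A_1)$, $\sigma^2\in\Delta(\mathcal A_2)$ (independent); payoffs $U_1=\mathbb E[F(S,T)]$, $U_2=\mathbb E[|T|]-\mathbb E[F(S,T)]$; Nash equilibrium as usual. Expected detection rate $r(\sigma)=\mathbb E_{S\sim\sigma^1,T\sim\sigma^2}[F(S,T)/|T|]$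 for profiles whose attack strategy is supported on nonempty sets. *)

From HB Require Import structures.
From mathcomp Require Import all_boot all_order all_algebra.
Set Implicit Arguments. Unset Strict Implicit. Unset Printing Implicit Defensive.
Import Order.TTheory GRing.Theory Num.Theory.

Section Detection.
Variables (V E : finType) (C : V -> {set E}).

Definition CS (S : {set V}) : {set E} := \bigcup_(i in S) C i.
Definition Fdet (S : {set V}) (T : {set E}) : nat := #|CS S :&: T|.

Definition is_cover (S : {set V}) : bool := CS S == [set: E].
Definition is_packing (T : {set E}) : bool := [forall i, #|C i :&: T| <= 1].

(* n* : minimum size of a set cover ([set: V] is one under the covering assumption) *)
Definition n_star : nat := \big[minn/#|V|]_(S : {set V} | is_cover S) #|S|.
(* m* : maximum size of a set packing (set0 is one) *)
Definition m_star : nat := \max_(T : {set E} | is_packing T) #|T|.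

Local Open Scope ring_scope.
Variable R : realFieldType.

(* a mixed strategy over {X : |X| <= b}, represented as a probability
   vector on all subsets vanishing outside the action set *)
Definition is_mixed (X : finType) (b : nat) (s : {set X} -> R) : Prop :=
  (forall A, 0 <= s A) /\ \sum_(A : {set X}) s A = 1 /\
  (forall A, s A != 0 -> (#|A| <= b)%N).

Definition U1 (s1 : {set V} -> R) (s2 : {set E} -> R) : R :=
  \sum_(S : {set V}) \sum_(T : {set E}) s1 S * s2 T * (Fdet S T)%:R.

Definition U2 (s1 : {set V} -> R) (s2 : {set E} -> R) : R :=
  \sum_(S : {set V}) \sum_(T : {set E}) s1 S * s2 T * ((#|T|)%:R - (Fdet S T)%:R).

Definition is_NE (b1 b2 : nat) (s1 : {set V} -> R) (s2 : {set E} -> R) : Prop :=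
  is_mixed b1 s1 /\ is_mixed b2 s2 /\
  (forall s1', is_mixed b1 s1' -> U1 s1' s2 <= U1 s1 s2) /\
  (forall s2', is_mixed b2 s2' -> U2 s1 s2' <= U2 s1 s2).

Definition attack_nonempty (s2 : {set E} -> R) : Prop :=
  forall T, s2 T != 0 -> T != set0.

Definition rate (s1 : {set V} -> R) (s2 : {set E} -> R) : R :=
  \sum_(S : {set V}) \sum_(T : {set E}) s1 S * s2 T * ((Fdet S T)%:R / (#|T|)%:R).

End Detection.

From HB Require Import structures.
From mathcomp Require Import all_boot all_order all_algebra.
From mathcomp Require Import ring lra.
From Stdlib Require Import Classical.
Import Order.TTheory GRing.Theory Num.Theory.
Set Implicit Arguments. Unset Strict Implicit. Unset Printing Implicit Defensive.
Local Open Scope ring_scope.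

(* Let p(e) be the probability that the defender's mixed strategy monitors e, and p_min its
   least value.  In an equilibrium of Γ(b1,b2) with b2 < m* and p_min < 1, every attack plan
   played consists of exactly b2 elements of detection probability p_min: otherwise the
   attacker gains by trading an element for a least detected one, unless some least detected
   element is attacked with certainty.  That is impossible: the defender, who does not monitor
   it surely, could then secure a payoff b1, while the attacker, spreading over b2 elements of
   a maximum packing, secures b2 - b1 b2 / m*, and the two payoffs add up to at most b2.
   Hence U1 = b2 p_min, and comparing with any other defender strategy shows that p_min is the
   defender's max-min detection probability, the same in all such equilibria whatever b2; the
   expected detection rate is p_min (trivially so when p_min = 1). *)

Section MixedStrategy.
Variables (R : realFieldType) (X : finType) (b : nat) (s : {set X} -> R).
Hypothesis s_mixed : is_mixed b s.

Lemma mixed_ge0 A : 0 <= s A.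
Proof. by case: s_mixed. Qed.

Lemma mixed_sum1 : \sum_A s A = 1.
Proof. by case: s_mixed => _ []. Qed.

Lemma mixed_support_card A : s A != 0 -> (#|A| <= b)%N.
Proof. by case: s_mixed => _ [_]; apply. Qed.

Lemma mixed_sum_ge (f : {set X} -> R) c :
  (forall A, s A != 0 -> c <= f A) -> c <= \sum_A s A * f A.
Proof.
move=> cf; rewrite -[c]mul1r -mixed_sum1 mulr_suml; apply: ler_sum => A _.
have [->|sA] := eqVneq (s A) 0; first by rewrite !mul0r.
by rewrite ler_wpM2l ?mixed_ge0 ?cf.
Qed.

Lemma mixed_sum_le (f : {set X} -> R) c :
  (forall A, s A != 0 -> f A <= c) -> \sum_A s A * f A <= c.
Proof.
move=> fc; rewrite -[c]mul1r -mixed_sum1 mulr_suml; apply: ler_sum => A _.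
have [->|sA] := eqVneq (s A) 0; first by rewrite !mul0r.
by rewrite ler_wpM2l ?mixed_ge0 ?fc.
Qed.

Lemma mixed_sum_eq (f : {set X} -> R) c :
  (forall A, s A != 0 -> f A = c) -> \sum_A s A * f A = c.
Proof.
move=> fc; apply/eqP; rewrite eq_le.
by rewrite mixed_sum_le ?mixed_sum_ge // => A /fc ->.
Qed.

Lemma mixed_prob_bounds (P : pred {set X}) : 0 <= \sum_A s A * (P A)%:R <= 1.
Proof.
by rewrite mixed_sum_ge ?mixed_sum_le // => A _; case: (P A); rewrite ?ler01 ?lexx.
Qed.

Lemma mixed_prob_eq1 (P : pred {set X}) :
  \sum_A s A * (P A)%:R = 1 <-> (forall A, s A != 0 -> P A).
Proof.
split=> [prob1 A sA|allP]; last by apply: mixed_sum_eq => A /allP ->.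
have slack0 : \sum_B s B * (1 - (P B)%:R) = 0.
  rewrite (eq_bigr (fun B => s B - s B * (P B)%:R)) => [|B _]; last first.
    by rewrite mulrBr mulr1.
  by rewrite sumrB mixed_sum1 prob1 subrr.
have slack_ge0 B : true -> 0 <= s B * (1 - (P B)%:R).
  by move=> _; rewrite mulr_ge0 ?mixed_ge0 // subr_ge0; case: (P B); rewrite ?ler01.
apply/negPn/negP => nPA; move: (psumr_eq0P slack_ge0 slack0 (i := A) isT) (sA).
by rewrite (negbTE nPA) subr0 mulr1 => ->; rewrite eqxx.
Qed.

Lemma mixed_support_best (f : {set X} -> R) (A B : {set X}) :
  (forall s', is_mixed b s' -> \sum_Y s' Y * f Y <= \sum_Y s Y * f Y) ->
  s A != 0 -> (#|B| <= b)%N -> f B <= f A.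
Proof.
move=> s_best sA cardB.
pose s' Y := s Y * (Y != A)%:R + s A * (Y == B)%:R.
have drop_A (g : {set X} -> R) :
    \sum_Y s Y * (Y != A)%:R * g Y = \sum_Y s Y * g Y - s A * g A.
  rewrite [in RHS](bigD1 A) //= [in LHS](bigD1 A) //= eqxx mulr0 mul0r add0r.
  rewrite addrAC subrr add0r; apply: eq_bigr => Y nYA; by rewrite nYA mulr1.
have pick_B (g : {set X} -> R) : \sum_Y (Y == B)%:R * g Y = g B.
  rewrite (bigD1 B) //= eqxx mul1r big1 ?addr0 // => Y /negbTE->; exact: mul0r.
have s'_mixed : is_mixed b s'.
  split; [|split].
  - by move=> Y; rewrite addr_ge0 ?mulr_ge0 ?mixed_ge0 ?ler0n.
  - transitivity (\sum_Y s Y * (Y != A)%:R * 1 + s A * \sum_Y (Y == B)%:R * 1).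
      rewrite big_split -mulr_sumr; congr (_ + _ * _).
        by apply: eq_bigr => Y _; rewrite mulr1.
      by apply: eq_bigr => Y _; rewrite mulr1.
    by rewrite drop_A pick_B (eq_bigr s (fun Y _ => mulr1 (s Y))) !mulr1 mixed_sum1 subrK.
  - move=> Y; rewrite /s'; have [-> //|nYB] := eqVneq Y B.
    rewrite mulr0 addr0; have [-> /eqP|sY _] := eqVneq (s Y) 0; first by rewrite mul0r.
    exact: mixed_support_card.
have := s_best s' s'_mixed.
rewrite (eq_bigr (fun Y => s Y * (Y != A)%:R * f Y + s A * ((Y == B)%:R * f Y)));
  last by move=> Y _; rewrite mulrDl mulrA.
rewrite big_split -mulr_sumr /= drop_A pick_B -addrA gerDl addrC subr_le0.
by rewrite ler_pM2l // lt_def sA mixed_ge0.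
Qed.

End MixedStrategy.

Section FiniteSets.
Variables (R : realFieldType) (X : finType).
Implicit Types (A B P : {set X}) (f : X -> R).

Lemma natr_cardI A B : (#|A :&: B|%:R : R) = \sum_(x in A) (x \in B)%:R.
Proof.
rewrite -sumr_const (eq_bigl (fun x => (x \in A) && (x \in B))) => [|x]; last first.
  exact: in_setI.
by rewrite big_mkcondr /=; apply: eq_bigr => x _; case: (x \in B).
Qed.

Lemma card_bigcup_le (I : finType) (S : {pred I}) (F : I -> {set X}) :
  (#|\bigcup_(i in S) F i| <= \sum_(i in S) #|F i|)%N.
Proof.
apply: (big_ind2 (fun A n => #|A| <= n)%N) => [|A m B n leA leB|//].
  by rewrite cards0.
by rewrite (leq_trans (leq_card_setU A B).1) ?leq_add.
Qed.

Lemma sum_subset_addr_le f A B x : (forall y, 0 <= f y) ->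
  A \subset B -> x \in B -> x \notin A -> \sum_(y in A) f y + f x <= \sum_(y in B) f y.
Proof.
move=> f_ge0 AB xB xA; rewrite addrC -big_setU1 //=.
have xAB : x |: A \subset B by rewrite subUset sub1set xB.
rewrite [X in _ <= X](big_setID (x |: A)) /= (setIidPr xAB) lerDl.
by apply: sumr_ge0.
Qed.

Lemma exists_arg_min f : (0 < #|X|)%N -> exists x, forall y, f x <= f y.
Proof.
case/card_gt0P => x0 _; exists [arg min_(x < x0) f x]%O.
by case: arg_minP => // x _ x_min y; exact: x_min.
Qed.

Lemma low_average_subset f k P : (k <= #|P|)%N ->
  exists2 T : {set X}, T \subset P /\ #|T| = k &
    #|P|%:R * \sum_(x in T) f x <= k%:R * \sum_(x in P) f x.
Proof.
move/subnKC; move: (#|P| - k)%N => n; elim: n P => [|n IH] P cardP.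
  by exists P; rewrite -cardP ?addn0.
have [x0 x0P] : exists x0, x0 \in P by apply/card_gt0P; rewrite -cardP addnS.
(* drop an element where f is largest and recurse *)
set m := [arg max_(x > x0 in P) f x]%O.
have [mP m_max] : m \in P /\ forall x, x \in P -> f x <= f m.
  by rewrite /m; case: arg_maxP.
have cardPm : (k + n)%N = #|P :\ m|.
  by move: cardP; rewrite (cardsD1 m) mP addnS add1n => -[].
have [T [TPm cardT] avgT] := IH _ cardPm.
have TP : T \subset P := subset_trans TPm (subsetDl P [set m]).
exists T => //.
have sumT : \sum_(x in T) f x <= k%:R * f m.
  rewrite -cardT mulr_natl -sumr_const; apply: ler_sum => x xT; exact/m_max/(subsetP TP).
rewrite (big_setD1 m mP) /= -cardP -cardPm in avgT *.
by rewrite addnS -addn1 natrD mulrDl mul1r mulrDr addrC lerD.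
Qed.

End FiniteSets.

Section Detection.
Variables (V E : finType) (C : V -> {set E}) (R : realFieldType).
Implicit Types (S : {set V}) (T P : {set E}).

Definition detect_prob (s1 : {set V} -> R) (e : E) : R := \sum_S s1 S * (e \in CS C S)%:R.
Definition attack_prob (s2 : {set E} -> R) (e : E) : R := \sum_T s2 T * (e \in T)%:R.
Definition defense_value (s2 : {set E} -> R) S : R := \sum_(e in CS C S) attack_prob s2 e.
Definition attack_detection (s1 : {set V} -> R) T : R := \sum_(e in T) detect_prob s1 e.
Definition attack_evasion (s1 : {set V} -> R) T : R := \sum_(e in T) (1 - detect_prob s1 e).
Definition least_detected (s1 : {set V} -> R) (es : E) : Prop :=
  forall e, detect_prob s1 es <= detect_prob s1 e.

Lemma defense_valueE (s2 : {set E} -> R) S :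
  defense_value s2 S = \sum_T s2 T * (Fdet C S T)%:R.
Proof.
rewrite /defense_value /attack_prob exchange_big; apply: eq_bigr => T _.
by rewrite /Fdet natr_cardI mulr_sumr.
Qed.

Lemma attack_detectionE (s1 : {set V} -> R) T :
  attack_detection s1 T = \sum_S s1 S * (Fdet C S T)%:R.
Proof.
rewrite /attack_detection /detect_prob exchange_big; apply: eq_bigr => S _.
by rewrite /Fdet setIC natr_cardI mulr_sumr.
Qed.

Lemma attack_evasionE (s1 : {set V} -> R) T :
  attack_evasion s1 T = #|T|%:R - attack_detection s1 T.
Proof. by rewrite /attack_evasion sumrB sumr_const. Qed.

Lemma attack_evasionU1 (s1 : {set V} -> R) e T : e \notin T ->
  attack_evasion s1 (e |: T) = 1 - detect_prob s1 e + attack_evasion s1 T.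
Proof. exact: big_setU1. Qed.

Lemma attack_evasionD1 (s1 : {set V} -> R) e T : e \in T ->
  attack_evasion s1 T = 1 - detect_prob s1 e + attack_evasion s1 (T :\ e).
Proof. exact: big_setD1. Qed.

Lemma U1_defense (s1 : {set V} -> R) s2 : U1 C s1 s2 = \sum_S s1 S * defense_value s2 S.
Proof.
apply: eq_bigr => S _; rewrite defense_valueE mulr_sumr.
by apply: eq_bigr => T _; rewrite mulrA.
Qed.

Lemma U1_attack (s1 : {set V} -> R) s2 : U1 C s1 s2 = \sum_T s2 T * attack_detection s1 T.
Proof.
rewrite /U1 exchange_big; apply: eq_bigr => T _; rewrite attack_detectionE mulr_sumr.
by apply: eq_bigr => S _; rewrite mulrCA mulrA.
Qed.

Lemma U2_attack b1 (s1 : {set V} -> R) s2 : is_mixed b1 s1 ->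
  U2 C s1 s2 = \sum_T s2 T * attack_evasion s1 T.
Proof.
move=> s1_mixed; rewrite /U2 exchange_big; apply: eq_bigr => T _.
rewrite attack_evasionE attack_detectionE.
rewrite (eq_bigr (fun S => s2 T * (s1 S * #|T|%:R - s1 S * (Fdet C S T)%:R))) => [|S _].
  by rewrite -mulr_sumr sumrB -mulr_suml (mixed_sum1 s1_mixed) mul1r.
by ring.
Qed.

Lemma rate_attack (s1 : {set V} -> R) s2 :
  rate C s1 s2 = \sum_T s2 T * (attack_detection s1 T / #|T|%:R).
Proof.
rewrite /rate exchange_big; apply: eq_bigr => T _.
rewrite attack_detectionE mulr_suml mulr_sumr; apply: eq_bigr => S _; ring.
Qed.

Lemma detect_prob_bounds b (s1 : {set V} -> R) e :
  is_mixed b s1 -> 0 <= detect_prob s1 e <= 1.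
Proof. by move/mixed_prob_bounds; apply. Qed.

Lemma attack_prob_ge0 b (s2 : {set E} -> R) e : is_mixed b s2 -> 0 <= attack_prob s2 e.
Proof. by move/mixed_prob_bounds => /(_ (fun T => e \in T)) /andP[]. Qed.

Lemma CS_subset S S' : S \subset S' -> CS C S \subset CS C S'.
Proof.
move=> SS'; apply/subsetP => e /bigcupP[i iS ei].
by apply/bigcupP; exists i => //; apply: (subsetP SS').
Qed.

Lemma cover_removal_le S e :
  \sum_(j in S) (((e \in CS C S)%:R : R) - (e \in CS C (S :\ j))%:R) <= (e \in CS C S)%:R.
Proof.
have [/bigcupP[k kS ek]|eS] := boolP (e \in CS C S); last first.
  rewrite big1 // => j _; suff /negbTE-> : e \notin CS C (S :\ j).
    by rewrite subrr.
  by apply: contra eS; apply/subsetP/CS_subset/subsetDl.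
(* e stays covered by k unless k itself is removed *)
rewrite (bigD1 k kS) /= big1 => [|j /andP[jS jk]]; last first.
  suff -> : e \in CS C (S :\ j) by rewrite subrr.
  by apply/bigcupP; exists k; rewrite // !inE eq_sym jk.
by rewrite addr0 gerBl; case: (_ \in _).
Qed.

Lemma defense_value_ind (s2 : {set E} -> R) S :
  defense_value s2 S = \sum_e (e \in CS C S)%:R * attack_prob s2 e.
Proof.
by rewrite /defense_value big_mkcond; apply: eq_bigr => e _; rewrite mulr_natl mulrb.
Qed.

Lemma sum_removal_loss_le b (s2 : {set E} -> R) S : is_mixed b s2 ->
  \sum_(j in S) (defense_value s2 S - defense_value s2 (S :\ j)) <= defense_value s2 S.
Proof.
move=> s2_mixed.
rewrite (eq_bigr (fun j => \sum_e ((e \in CS C S)%:R - (e \in CS C (S :\ j))%:R)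
  * attack_prob s2 e)) => [|j _]; last first.
  by rewrite !defense_value_ind -sumrB; apply: eq_bigr => e _; rewrite mulrBl.
rewrite exchange_big defense_value_ind; apply: ler_sum => e _.
by rewrite -mulr_suml ler_wpM2r ?(attack_prob_ge0 _ s2_mixed) ?cover_removal_le.
Qed.

Lemma Fdet_packing_le S P : is_packing C P -> (Fdet C S P <= #|S|)%N.
Proof.
move=> /forallP packP.
have cover_split : CS C S :&: P \subset \bigcup_(i in S) (C i :&: P).
  apply/subsetP => e /setIP[/bigcupP[i iS ei] eP].
  by apply/bigcupP; exists i; rewrite ?inE ?ei.
apply: leq_trans (subset_leq_card cover_split) _.
apply: leq_trans (card_bigcup_le _ _) _.
by rewrite -sum1_card; apply: leq_sum => i _; apply: packP.
Qed.

Lemma packing_detection_le b1 (s1 : {set V} -> R) P :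
  is_mixed b1 s1 -> is_packing C P -> attack_detection s1 P <= b1%:R.
Proof.
move=> s1_mixed packP; rewrite attack_detectionE; apply: (mixed_sum_le s1_mixed) => S sS.
by rewrite ler_nat (leq_trans (Fdet_packing_le S packP)) ?(mixed_support_card s1_mixed).
Qed.

Lemma exists_max_packing : exists2 P, is_packing C P & #|P| = m_star C.
Proof.
have packing0 : is_packing C set0 by apply/forallP => i; rewrite setI0 cards0.
exists [arg max_(T > set0 | is_packing C T) #|T|]%N.
  by case: arg_maxnP.
by rewrite /m_star (bigop.bigmax_eq_arg _ packing0).
Qed.

Lemma n_star_le S : is_cover C S -> (n_star C <= #|S|)%N.
Proof. by move=> coverS; rewrite /n_star -minEnat -leEnat; apply: bigmin_le_cond. Qed.

Lemma least_detected_safe b (s1 : {set V} -> R) es e : is_mixed b s1 ->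
  least_detected s1 es -> 1 <= detect_prob s1 es -> detect_prob s1 e = 1.
Proof.
move=> s1_mixed es_least es_safe; apply/eqP; rewrite eq_le (le_trans es_safe (es_least e)).
by have /andP[_ ->] := detect_prob_bounds e s1_mixed.
Qed.

Lemma least_detected_lt1 b1 (s1 : {set V} -> R) es : (b1 < n_star C)%N ->
  is_mixed b1 s1 -> least_detected s1 es -> detect_prob s1 es < 1.
Proof.
move=> b1_small s1_mixed es_least; rewrite ltNge; apply/negP => es_safe.
have [S sS] : exists S, s1 S != 0.
  apply: not_all_not_ex => all0; move: (mixed_sum1 s1_mixed).
  by rewrite big1 => [/eqP|S _]; [rewrite eq_sym oner_eq0 | apply/eqP/negPn/negP/all0].
have coverS : is_cover C S.
  apply/eqP/setP => e; rewrite inE.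
  apply: (mixed_prob_eq1 s1_mixed (fun S => e \in CS C S)).1 sS.
  exact: least_detected_safe s1_mixed es_least es_safe.
have := leq_trans (n_star_le coverS) (mixed_support_card s1_mixed sS).
by rewrite leqNgt b1_small.
Qed.

Lemma U1_add_U2_le b1 b2 (s1 : {set V} -> R) (s2 : {set E} -> R) :
  is_mixed b1 s1 -> is_mixed b2 s2 -> U1 C s1 s2 + U2 C s1 s2 <= b2%:R.
Proof.
move=> s1_mixed s2_mixed; rewrite U1_attack (U2_attack _ s1_mixed) -big_split /=.
under eq_bigr do rewrite -mulrDr attack_evasionE addrC subrK.
by apply: (mixed_sum_le s2_mixed) => T /(mixed_support_card s2_mixed); rewrite ler_nat.
Qed.

Hypothesis hcov : forall e : E, exists i : V, e \in C i.
Variable b1 : nat.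
Hypothesis b1_gt0 : (0 < b1)%N.

Section Equilibrium.
Variables (b2 : nat) (s1 : {set V} -> R) (s2 : {set E} -> R).
Hypothesis NE : is_NE C b1 b2 s1 s2.

Let s1_mixed : is_mixed b1 s1. Proof. by case: NE. Qed.
Let s2_mixed : is_mixed b2 s2. Proof. by case: NE => _ []. Qed.

Lemma NE_defense_best S S' : s1 S != 0 -> (#|S'| <= b1)%N ->
  defense_value s2 S' <= defense_value s2 S.
Proof.
case: NE => _ [_ [best1 _]]; apply: (mixed_support_best s1_mixed) => t1 t1_mixed.
by rewrite -!U1_defense; apply: best1.
Qed.

Lemma NE_attack_best T T' : s2 T != 0 -> (#|T'| <= b2)%N ->
  attack_evasion s1 T' <= attack_evasion s1 T.
Proof.
case: NE => _ [_ [_ best2]]; apply: (mixed_support_best s2_mixed) => t2 t2_mixed.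
by rewrite -!(U2_attack _ s1_mixed); apply: best2.
Qed.

Lemma NE_U1_ge e0 : attack_prob s2 e0 = 1 -> detect_prob s1 e0 < 1 -> b1%:R <= U1 C s1 s2.
Proof.
move=> e0_sure e0_unsafe.
have /existsP[S0 /andP[sS0 e0S0]] : [exists S0, (s1 S0 != 0) && (e0 \notin CS C S0)].
  apply: contraLR e0_unsafe => /existsPn all_cover; rewrite -leNgt.
  suff -> : detect_prob s1 e0 = 1 by [].
  apply/(mixed_prob_eq1 s1_mixed (fun S => e0 \in CS C S)) => S sS.
  by move: (all_cover S); rewrite sS negbK.
have [i e0i] := hcov e0.
(* adding i to a plan inside S0 newly monitors the surely attacked e0 *)
have gain S : S \subset S0 -> (#|S| < b1)%N ->
    defense_value s2 S + 1 <= defense_value s2 S0.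
  move=> SS0 small; apply: le_trans (NE_defense_best sS0 (S' := i |: S) _); last first.
    by rewrite cardsU1; case: (_ \notin _); rewrite /= ?add1n ?add0n // ltnW.
  rewrite -e0_sure; apply: sum_subset_addr_le.
  - by move=> e; apply: attack_prob_ge0 s2_mixed.
  - exact/CS_subset/subsetUr.
  - by apply/bigcupP; exists i; rewrite ?setU11.
  - by apply: contra e0S0; apply/subsetP/CS_subset.
have cardS0 : #|S0| = b1.
  apply/eqP; rewrite eqn_leq (mixed_support_card s1_mixed sS0) leqNgt /=.
  by apply/negP => /(gain _ (subxx _)); rewrite gerDl ler10.
have S0_value : b1%:R <= defense_value s2 S0.
  apply: le_trans (sum_removal_loss_le _ s2_mixed); rewrite -cardS0 -sum1_card natr_sum.
  apply: ler_sum => j jS0; rewrite lerBrDr addrC; apply: gain; first exact: subsetDl.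
  by rewrite -cardS0 (cardsD1 j S0) jS0.
rewrite U1_defense; apply: (mixed_sum_ge s1_mixed) => S sS.
by apply: le_trans S0_value (NE_defense_best sS _); rewrite cardS0.
Qed.

Lemma NE_U2_ge : (b2 <= m_star C)%N ->
  b2%:R * ((m_star C)%:R - b1%:R) <= (m_star C)%:R * U2 C s1 s2.
Proof.
move=> b2_le.
have [P packP cardP] := exists_max_packing.
have b2_le_P : (b2 <= #|P|)%N by rewrite cardP.
have [T [_ cardT] avgT] := low_average_subset (detect_prob s1) b2_le_P.
rewrite -/(attack_detection s1 T) -/(attack_detection s1 P) cardP in avgT.
have detP := packing_detection_le s1_mixed packP.
have evT : #|T|%:R - attack_detection s1 T <= U2 C s1 s2.
  rewrite -attack_evasionE (U2_attack _ s1_mixed); apply: (mixed_sum_ge s2_mixed) => T' sT'.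
  by apply: NE_attack_best sT' _; rewrite cardT.
rewrite cardT in evT.
have m_ge0 : (0 : R) <= (m_star C)%:R by [].
have b2_ge0 : (0 : R) <= b2%:R by [].
(* m* U2 >= m* (b2 - det T) >= m* b2 - b2 det P >= b2 (m* - b1) *)
nra.
Qed.

Hypothesis b2_lt_mstar : (b2 < m_star C)%N.

Lemma NE_sure_target_detected e0 : attack_prob s2 e0 = 1 -> detect_prob s1 e0 = 1.
Proof.
move=> e0_sure; apply/eqP; rewrite eq_le.
have /andP[_ ->] := detect_prob_bounds e0 s1_mixed.
rewrite leNgt; apply/negP => e0_unsafe.
have U1_ge := NE_U1_ge e0_sure e0_unsafe.
have U2_ge := NE_U2_ge (ltnW b2_lt_mstar).
have U_le := U1_add_U2_le s1_mixed s2_mixed.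
set m := (m_star C)%:R in U2_ge *.
have m_U1 : m * b1%:R <= m * U1 C s1 s2 by rewrite ler_wpM2l.
have m_U : m * (U1 C s1 s2 + U2 C s1 s2) <= m * b2%:R by rewrite ler_wpM2l.
have gap : 0 < b1%:R * (m - b2%:R) by rewrite mulr_gt0 ?ltr0n // subr_gt0 ltr_nat.
(* m* b1 + b2 (m* - b1) <= m* (U1 + U2) <= m* b2, i.e. b1 (m* - b2) <= 0 *)
lra.
Qed.

Section LeastDetected.
Variable es : E.
Hypotheses (es_least : least_detected s1 es) (es_unsafe : detect_prob s1 es < 1).
Local Notation pmin := (detect_prob s1 es).

Lemma NE_attack_contains_least T :
  (#|[set e | detect_prob s1 e == pmin]| < b2)%N -> s2 T != 0 -> es \in T.
Proof.
move=> few_least sT; apply/negPn/negP => esT.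
have cardT := mixed_support_card s2_mixed sT.
have [small|] := ltnP #|T| b2.
  have := NE_attack_best sT (T' := es |: T); rewrite cardsU1 esT attack_evasionU1 //.
  by move=> /(_ small) ?; have := es_unsafe; lra.
move=> large; have cardTb2 : #|T| = b2 by apply/eqP; rewrite eqn_leq cardT large.
(* T is larger than the set of least detected elements: trade one outside it for es *)
have [f fT f_not_least] : exists2 f, f \in T & f \notin [set e | detect_prob s1 e == pmin].
  apply/subsetPn; apply: contraTN few_least => /subset_leq_card.
  by rewrite cardTb2 -leqNgt.
have pf : pmin < detect_prob s1 f.
  by rewrite inE in f_not_least; rewrite lt_def f_not_least es_least.
have esTf : es \notin T :\ f by rewrite !inE negb_and esT orbT.
have swap_card : (#|es |: (T :\ f)| <= b2)%N.
  by rewrite cardsU1 esTf; move: (cardsD1 f T); rewrite fT cardTb2 => ->.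
have := NE_attack_best sT swap_card.
by rewrite attack_evasionU1 // (attack_evasionD1 _ fT); lra.
Qed.

Lemma NE_attack_support T :
  s2 T != 0 -> #|T| = b2 /\ {in T, forall e, detect_prob s1 e = pmin}.
Proof.
move=> sT; set A := [set e | detect_prob s1 e == pmin].
have [few_least|many_least] := ltnP #|A| b2.
  have es_sure : attack_prob s2 es = 1.
    apply/(mixed_prob_eq1 s2_mixed (fun T => es \in T)) => T'.
    exact: NE_attack_contains_least.
  by move: es_unsafe; rewrite (NE_sure_target_detected es_sure) ltxx.
have [T' [T'A cardT'] _] := low_average_subset (detect_prob s1) many_least.
have evT' : attack_evasion s1 T' = b2%:R * (1 - pmin).
  rewrite /attack_evasion -cardT' mulr_natl -sumr_const; apply: eq_bigr => e eT'.
  by have := subsetP T'A e eT'; rewrite inE => /eqP->.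
have := NE_attack_best sT (eq_leq cardT'); rewrite evT' => evT_ge.
have evT_le : attack_evasion s1 T <= #|T|%:R * (1 - pmin).
  rewrite mulr_natl -sumr_const; apply: ler_sum => e _; by rewrite lerB.
have pmin_gap : 0 < 1 - pmin by rewrite subr_gt0.
have cardT : #|T| = b2.
  apply/eqP; rewrite eqn_leq (mixed_support_card s2_mixed sT) -(ler_nat R).
  by rewrite -(ler_pM2r pmin_gap) (le_trans evT_ge evT_le).
split=> // e eT.
have excess0 : \sum_(x in T) (detect_prob s1 x - pmin) = 0.
  apply/eqP; rewrite eq_le andbC sumr_ge0 => [|x _]; last by rewrite subr_ge0.
  rewrite (eq_bigr (fun x => (1 - pmin) - (1 - detect_prob s1 x))) => [|x _]; last by ring.
  by rewrite sumrB sumr_const -mulr_natl -/(attack_evasion s1 T) cardT subr_le0.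
have excess_ge0 x : x \in T -> 0 <= detect_prob s1 x - pmin by rewrite subr_ge0.
by apply/eqP; rewrite -subr_eq0 (psumr_eq0P excess_ge0 excess0).
Qed.

Lemma NE_attack_detection T : s2 T != 0 -> attack_detection s1 T = b2%:R * pmin.
Proof.
move=> /NE_attack_support[cardT min_on_T].
by rewrite -cardT mulr_natl -sumr_const; apply: eq_bigr.
Qed.

Lemma NE_payoffs : U1 C s1 s2 = b2%:R * pmin /\ U2 C s1 s2 = b2%:R * (1 - pmin).
Proof.
split; first by rewrite U1_attack; apply: (mixed_sum_eq s2_mixed) => T /NE_attack_detection.
rewrite (U2_attack _ s1_mixed); apply: (mixed_sum_eq s2_mixed) => T sT.
rewrite attack_evasionE NE_attack_detection // (proj1 (NE_attack_support sT)).
by rewrite mulrBr mulr1.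
Qed.

End LeastDetected.

Lemma NE_rate es : attack_nonempty s2 -> least_detected s1 es ->
  rate C s1 s2 = detect_prob s1 es.
Proof.
move=> nonempty es_least; rewrite rate_attack; apply: (mixed_sum_eq s2_mixed) => T sT.
have cardT_neq0 : (#|T|%:R : R) != 0 by rewrite pnatr_eq0 cards_eq0 nonempty.
have [es_unsafe|es_safe] := ltP (detect_prob s1 es) 1.
  rewrite (NE_attack_detection es_least es_unsafe sT).
  by rewrite -(proj1 (NE_attack_support es_least es_unsafe sT)) mulrC mulKf.
have all_safe e := least_detected_safe e s1_mixed es_least es_safe.
rewrite all_safe /attack_detection (eq_bigr (fun=> 1)) => [|e _]; last exact: all_safe.
by rewrite sumr_const divff.
Qed.

Lemma NE_least_detection_max (t1 : {set V} -> R) es et : (0 < b2)%N ->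
  is_mixed b1 t1 -> least_detected s1 es -> least_detected t1 et ->
  detect_prob t1 et <= detect_prob s1 es.
Proof.
move=> b2_gt0 t1_mixed es_least et_least.
have [es_unsafe|es_safe] := ltP (detect_prob s1 es) 1; last first.
  by apply: le_trans es_safe; have /andP[] := detect_prob_bounds et t1_mixed.
have [U1_eq _] := NE_payoffs es_least es_unsafe.
have t1_worse : U1 C t1 s2 <= U1 C s1 s2 by case: NE => _ [_ [best1 _]]; apply: best1.
rewrite U1_eq in t1_worse.
have t1_value : b2%:R * detect_prob t1 et <= U1 C t1 s2.
  rewrite U1_attack; apply: (mixed_sum_ge s2_mixed) => T sT.
  rewrite -(proj1 (NE_attack_support es_least es_unsafe sT)) mulr_natl -sumr_const.
  by apply: ler_sum => e _; apply: et_least.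
have b2_pos : (0 : R) < b2%:R by rewrite ltr0n.
by rewrite -(ler_pM2l b2_pos) (le_trans t1_value).
Qed.

Lemma NE_small_budget es : (b1 < n_star C)%N -> least_detected s1 es ->
  (forall T, s2 T != 0 -> #|T| = b2) /\
  U1 C s1 s2 = b2%:R * detect_prob s1 es /\ U2 C s1 s2 = b2%:R * (1 - detect_prob s1 es).
Proof.
move=> b1_small es_least; have es_unsafe := least_detected_lt1 b1_small s1_mixed es_least.
split; first by move=> T /(NE_attack_support es_least es_unsafe)[].
exact: NE_payoffs es_least es_unsafe.
Qed.

End Equilibrium.

Lemma NE_least_detection_eq b2 b2' s1 s2 t1 t2 es et :
  (0 < b2)%N -> (b2 < m_star C)%N -> (0 < b2')%N -> (b2' < m_star C)%N ->
  is_NE C b1 b2 s1 s2 -> is_NE C b1 b2' t1 t2 ->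
  least_detected s1 es -> least_detected t1 et -> detect_prob t1 et = detect_prob s1 es.
Proof.
move=> b2_gt0 b2_lt b2'_gt0 b2'_lt NE NE' es_least et_least.
have [[s1_mixed _] [t1_mixed _]] := (NE, NE').
apply/eqP; rewrite eq_le.
rewrite (NE_least_detection_max NE b2_lt b2_gt0 t1_mixed es_least et_least).
by rewrite (NE_least_detection_max NE' b2'_lt b2'_gt0 s1_mixed et_least es_least).
Qed.

End Detection.

Theorem theorem3 (R : realFieldType) (V E : finType) (C : V -> {set E})
  (hV : (0 < #|V|)%N) (hE : (0 < #|E|)%N)
  (hcov : forall e : E, exists i : V, e \in C i)
  (b1 : nat) (hb1 : (0 < b1)%N) :
  exists r : R, 0 <= r <= 1 /\
    (forall (b2 : nat) (s1 : {set V} -> R) (s2 : {set E} -> R),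
       (0 < b2)%N -> (b2 < m_star C)%N ->
       is_NE C b1 b2 s1 s2 -> attack_nonempty s2 ->
       rate C s1 s2 = r) /\
    ((b1 < n_star C)%N ->
     forall (b2 : nat) (s1 : {set V} -> R) (s2 : {set E} -> R),
       (0 < b2)%N -> (b2 < m_star C)%N ->
       is_NE C b1 b2 s1 s2 ->
       (forall T, s2 T != 0 -> #|T| = b2) /\
       U1 C s1 s2 = b2%:R * r /\ U2 C s1 s2 = b2%:R * (1 - r)).
Proof.
have [[b2 [s1 [s2 [b2_gt0 b2_lt NE _]]]] | none] :=
  classic (exists b2 (s1 : {set V} -> R) (s2 : {set E} -> R),
    [/\ (0 < b2)%N, (b2 < m_star C)%N, is_NE C b1 b2 s1 s2 & attack_nonempty s2]).
  have [es es_least] := exists_arg_min (detect_prob C s1) hE.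
  have [s1_mixed _] := NE.
  exists (detect_prob C s1 es); split; first exact: detect_prob_bounds s1_mixed.
  split=> [b2' t1 t2 b2'_gt0 b2'_lt NE' nonempty | b1_small b2' t1 t2 b2'_gt0 b2'_lt NE'];
    have [et et_least] := exists_arg_min (detect_prob C t1) hE;
    rewrite -(NE_least_detection_eq hcov hb1 b2_gt0 b2_lt b2'_gt0 b2'_lt NE NE'
                es_least et_least).
    exact: (NE_rate hcov hb1 NE' b2'_lt nonempty et_least).
  exact: (NE_small_budget hcov hb1 NE' b2'_lt b1_small et_least).
(* Both claims are then vacuous: for b1 < n* every equilibrium attacks nonempty plans. *)
exists 0; split; first by rewrite lexx ler01.
split=> [b2 s1 s2 b2_gt0 b2_lt NE nonempty | b1_small b2 s1 s2 b2_gt0 b2_lt NE];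
  case: none; exists b2, s1, s2; split=> // T sT.
have [es es_least] := exists_arg_min (detect_prob C s1) hE.
have [cardT _] := NE_small_budget hcov hb1 NE b2_lt b1_small es_least.
by rewrite -card_gt0 cardT.
Qed.
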